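(* Let $A=(a_{nk})$ be an infinite complex matrix such that $l_A$ contains $\phi$ and $e$. If $l_A$ is deferred Ces\`{a}ro conull, then $A$ is not $l$-replaceable.
   Context: Fix sequences $p=(p(n))$, $q=(q(n))$ of nonnegative integers with $p(n)<q(n)$ for all $n$ and $q(n)\to\infty$. $\delta^j$ denotes the sequence with $1$ in position $j$ and $0$ elsewhere, $\phi$ the linear span of all $\delta^j$, $e=(1,1,1,\dots)$, and $\phi_1$ the span of $\phi$ and $e$. For a matrix $A$, $l_A=\{x : \sum_k a_{nk}x_k \text{ converges for each } n \text{ and } \sum_n|\sum_k a_{nk}x_k|<\infty\}$, an FK-space (complete metrizable locally convex sequence space with continuous coordinates) with its usual topology given by the seminorms $|x_n|$, $\sum_n|\sum_k a_{nk}x_k|$, and $\sup_m|\sum_{k=1}^m a_{nk}x_k|$; $l_A'$ is its continuous dual. $A$ (with $l_A\supseteq\phi$) is called $l$-replaceable if there is a matrix $D=(d_{nk})$ with $l_D=l_A$ and $\sum_n d_{nk}=1$ for every $k$. An FK-space $X\supseteq\phi_1$ is called deferred Ces\`{a}ro conull if for every $f\in X'$, $f(e)=\lim_{n\to\infty}\frac{1}{q(n)-p(n)}\sum_{k=p(n)+1}^{q(n)}\sum_{j=1}^{k}f(\delta^j)$. *)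

From Stdlib Require Import Reals.
From Coquelicot Require Import Coquelicot.
Open Scope R_scope.

(* Sequences are indexed by nat; paper index k >= 1 corresponds to nat index k-1. *)
Definition cseq := nat -> C.
Definition cmatrix := nat -> nat -> C.

Fixpoint psum (a : cseq) (m : nat) : C :=
  match m with O => RtoC 0 | S m' => Cplus (psum a m') (a m') end.

Definition has_csum (a : cseq) (l : C) : Prop :=
  filterlim (psum a) eventually (locally l).
Definition cconv (a : cseq) : Prop := exists l, has_csum a l.
(* the sum of a series (meaningful when it converges) *)
Definition csum (a : cseq) : C :=
  (Series (fun k => Re (a k)), Series (fun k => Im (a k))).

Definition delta (j : nat) : cseq := fun k => if Nat.eqb k j then RtoC 1 else RtoC 0.
Definition e_seq : cseq := fun _ => RtoC 1.

Definition Arow (A : cmatrix) (x : cseq) (n : nat) : C := csum (fun k => Cmult (A n k) (x k)).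

Definition lA (A : cmatrix) (x : cseq) : Prop :=
  (forall n, cconv (fun k => Cmult (A n k) (x k))) /\
  ex_series (fun n => Cmod (Arow A x n)).

(* seminorms of the FK topology of l_A *)
Definition sem_coord (x : cseq) (n : nat) : R := Cmod (x n).
Definition sem_sum (A : cmatrix) (x : cseq) : R := Series (fun n => Cmod (Arow A x n)).
Definition sem_sup (A : cmatrix) (x : cseq) (n : nat) : R :=
  real (Lub_Rbar (fun t => exists m, t = Cmod (psum (fun k => Cmult (A n k) (x k)) m))).

Fixpoint rsum (g : nat -> R) (N : nat) : R :=
  match N with O => 0 | S N' => rsum g N' + g N' end.

(* f is a continuous linear functional on l_A (f in l_A'): linear on l_A and
   bounded by finitely many of the defining seminorms of the locally convex
   topology. *)
Definition lA_dual (A : cmatrix) (f : cseq -> C) : Prop :=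
  (forall x y, lA A x -> lA A y -> f (fun k => Cplus (x k) (y k)) = Cplus (f x) (f y)) /\
  (forall (c : C) x, lA A x -> f (fun k => Cmult c (x k)) = Cmult c (f x)) /\
  (exists (M : R) (N : nat), forall x, lA A x ->
     Cmod (f x) <= M * (rsum (sem_coord x) N + sem_sum A x + rsum (sem_sup A x) N)).

(* deferred Cesaro averages: 1/(q n - p n) * sum_{k=p n+1}^{q n} sum_{j=1}^k f(delta^j) *)
Definition dc_mean (p q : nat -> nat) (f : cseq -> C) (n : nat) : C :=
  Cmult (RtoC (/ INR (q n - p n)))
    (psum (fun t => psum (fun i => f (delta i)) (S (p n) + t)) (q n - p n)).

Definition dc_conull (p q : nat -> nat) (A : cmatrix) : Prop :=
  forall f, lA_dual A f -> filterlim (dc_mean p q f) eventually (locally (f e_seq)).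

Definition l_replaceable (A : cmatrix) : Prop :=
  exists D : cmatrix, (forall x, lA D x <-> lA A x) /\
    (forall k, has_csum (fun n => D n k) (RtoC 1)).

From Stdlib Require Import Reals Lra Lia Arith FunctionalExtensionality Classical IndefiniteDescription.
From Coquelicot Require Import Coquelicot.
Open Scope R_scope.

(* Write [y^n = e - m^n], where [m^n] is the finitely supported vector at which every continuous
   functional [f] takes the value of its deferred Cesaro mean.  Then [y^n] is a ramp with values in
   [0, 1], nondecreasing in [k] and coordinatewise null, and conullity says [f y^n -> 0] for all [f]
   in [l_A'].  Testing with [f x = sum_r u_r (Ax)_r], [|u_r| <= 1], and a gliding hump shows that
   the [l^1]-norms of [A y^n] are eventually bounded.  If [D] had [l_D = l_A] and all column sums
   [1], the functional [x |-> sum_r (Dx)_r] would equal [1] on every [delta^j], so its deferred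
   Cesaro means grow like [q n / 2] and the [l^1]-norms of [D y^n] blow up.  A second gliding hump
   then produces [x = sum_i 2^-i y^(n_i)] with [x] in [l_A] but [Dx] not in [l^1]. *)

Definition climit (u : nat -> C) (l : C) : Prop :=
  forall eps, 0 < eps -> exists N, forall m, (N <= m)%nat -> Cmod (Cminus (u m) l) < eps.

Definition rlimit (u : nat -> R) (l : R) : Prop :=
  forall eps, 0 < eps -> exists N, forall m, (N <= m)%nat -> Rabs (u m - l) < eps.

Lemma climit_filterlim u l : climit u l -> filterlim u eventually (locally l).
Proof.
  intros H. apply filterlim_locally. intros eps.
  destruct (H eps (cond_pos eps)) as [N HN]. exists N. intros n Hn.
  apply C_NormedModule_mixin_compat1. apply HN; auto.
Qed.

Lemma filterlim_climit u l : filterlim u eventually (locally l) -> climit u l.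
Proof.
  intros H eps Heps.
  assert (H2 : 0 < sqrt 2) by (apply sqrt_lt_R0; lra).
  assert (Hp : 0 < eps / sqrt 2) by (apply Rdiv_lt_0_compat; lra).
  destruct (proj1 (filterlim_locally u l) H (mkposreal _ Hp)) as [N HN].
  exists N. intros m Hm. specialize (HN m Hm).
  apply C_NormedModule_mixin_compat2 in HN. simpl in HN.
  replace eps with (sqrt 2 * (eps / sqrt 2)) by (field; lra). exact HN.
Qed.

Lemma has_csum_climit a l : has_csum a l <-> climit (psum a) l.
Proof. split; [apply filterlim_climit | apply climit_filterlim]. Qed.

Lemma Cmod_minus_sym x y : Cmod (Cminus x y) = Cmod (Cminus y x).
Proof. replace (Cminus x y) with (Copp (Cminus y x)) by ring. apply Cmod_opp. Qed.

Lemma Cmod_minus_triangle x y z : Cmod (Cminus x z) <= Cmod (Cminus x y) + Cmod (Cminus y z).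
Proof.
  replace (Cminus x z) with (Cplus (Cminus x y) (Cminus y z)) by ring. apply Cmod_triangle.
Qed.

Lemma Cmod_plus_ge a b : Cmod a - Cmod b <= Cmod (Cplus a b).
Proof.
  pose proof (Cmod_triangle (Cplus a b) (Copp b)) as H. rewrite Cmod_opp in H.
  replace (Cplus (Cplus a b) (Copp b)) with a in H by ring. lra.
Qed.

Lemma Cmod_triangle_inv a b : Rabs (Cmod a - Cmod b) <= Cmod (Cminus a b).
Proof.
  pose proof (Cmod_plus_ge a (Copp b)) as H1. pose proof (Cmod_plus_ge (Copp b) a) as H2.
  rewrite Cmod_opp in H1, H2. replace (Cplus (Copp b) a) with (Cminus a b) in H2 by ring.
  apply Rabs_le; unfold Cminus in *; lra.
Qed.

Lemma Im_le_Cmod z : Rabs (Im z) <= Cmod z.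
Proof.
  destruct z as [x y]. unfold Cmod; simpl. rewrite <- sqrt_Rsqr_abs. apply sqrt_le_1_alt.
  unfold Rsqr. nra.
Qed.

Lemma Cmod_le_Rabs_Re_Im z : Cmod z <= Rabs (Re z) + Rabs (Im z).
Proof.
  destruct z as [x y]. unfold Cmod; simpl.
  pose proof (Rabs_pos x); pose proof (Rabs_pos y).
  rewrite <- (sqrt_Rsqr (Rabs x + Rabs y)) by lra.
  apply sqrt_le_1_alt. unfold Rsqr.
  assert (Rabs x * Rabs x = x * x) by (rewrite <- Rabs_mult; apply Rabs_pos_eq; nra).
  assert (Rabs y * Rabs y = y * y) by (rewrite <- Rabs_mult; apply Rabs_pos_eq; nra).
  nra.
Qed.

Lemma psum_ext a b m : (forall k, (k < m)%nat -> a k = b k) -> psum a m = psum b m.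
Proof.
  induction m; intros H; simpl; auto.
  rewrite IHm by (intros; apply H; lia). rewrite H by lia. auto.
Qed.

Lemma psum_plus a b m : psum (fun k => Cplus (a k) (b k)) m = Cplus (psum a m) (psum b m).
Proof. induction m; simpl. ring. rewrite IHm. ring. Qed.

Lemma psum_scal c a m : psum (fun k => Cmult c (a k)) m = Cmult c (psum a m).
Proof. induction m; simpl. ring. rewrite IHm. ring. Qed.

Lemma psum_opp a m : psum (fun k => Copp (a k)) m = Copp (psum a m).
Proof. induction m; simpl. ring. rewrite IHm. ring. Qed.

Lemma psum_add a m j : psum a (m + j) = Cplus (psum a m) (psum (fun k => a (m + k)%nat) j).
Proof.
  induction j; simpl. rewrite Nat.add_0_r. ring.
  rewrite Nat.add_succ_r. simpl. rewrite IHj. ring.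
Qed.

Lemma psum_RtoC b m : psum (fun k => RtoC (b k)) m = RtoC (rsum b m).
Proof. induction m; simpl; auto. rewrite IHm. unfold RtoC, Cplus. simpl. f_equal; ring. Qed.

Lemma psum_Re a m : Re (psum a m) = rsum (fun k => Re (a k)) m.
Proof. induction m; simpl; auto. rewrite <- IHm. reflexivity. Qed.

Lemma psum_Im a m : Im (psum a m) = rsum (fun k => Im (a k)) m.
Proof. induction m; simpl; auto. rewrite <- IHm. reflexivity. Qed.

Lemma psum_split_at g I i : (i < I)%nat ->
  psum g I = Cplus (g i) (psum (fun j => if Nat.eqb j i then RtoC 0 else g j) I).
Proof.
  induction I as [|I IH]; intros Hi; [lia|]. simpl.
  destruct (Nat.eqb_spec I i).
  - subst. rewrite (psum_ext (fun j => if Nat.eqb j i then RtoC 0 else g j) g i). ring.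
    intros k Hk. destruct (Nat.eqb_spec k i); auto. lia.
  - rewrite IH by lia. ring.
Qed.

Lemma rsum_ext a b m : (forall k, (k < m)%nat -> a k = b k) -> rsum a m = rsum b m.
Proof.
  induction m; intros H; simpl; auto.
  rewrite IHm by (intros; apply H; lia). rewrite H by lia. auto.
Qed.

Lemma rsum_plus a b m : rsum (fun k => a k + b k) m = rsum a m + rsum b m.
Proof. induction m; simpl. ring. rewrite IHm. ring. Qed.

Lemma rsum_minus a b m : rsum (fun k => a k - b k) m = rsum a m - rsum b m.
Proof. induction m; simpl. ring. rewrite IHm. ring. Qed.

Lemma rsum_scal c a m : rsum (fun k => c * a k) m = c * rsum a m.
Proof. induction m; simpl. ring. rewrite IHm. ring. Qed.

Lemma rsum_zero m : rsum (fun _ => 0) m = 0.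
Proof. induction m; simpl; auto. rewrite IHm. ring. Qed.

Lemma rsum_one m : rsum (fun _ => 1) m = INR m.
Proof. induction m as [|m IH]; [reflexivity|]. simpl rsum. rewrite IH, S_INR. ring. Qed.

Lemma rsum_add a m j : rsum a (m + j) = rsum a m + rsum (fun k => a (m + k)%nat) j.
Proof.
  induction j; simpl. rewrite Nat.add_0_r. ring.
  rewrite Nat.add_succ_r. simpl. rewrite IHj. ring.
Qed.

Lemma rsum_le a b m : (forall k, (k < m)%nat -> a k <= b k) -> rsum a m <= rsum b m.
Proof.
  induction m; intros H; simpl; [lra|].
  pose proof (H m ltac:(lia)). pose proof (IHm ltac:(intros; apply H; lia)). lra.
Qed.

Lemma rsum_nonneg g m : (forall k, 0 <= g k) -> 0 <= rsum g m.
Proof. intros H; induction m; simpl; [lra | specialize (H m); lra]. Qed.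

Lemma rsum_mono g m m' : (forall k, 0 <= g k) -> (m <= m')%nat -> rsum g m <= rsum g m'.
Proof. intros H Hm. induction Hm; [lra|]. simpl. specialize (H m0). lra. Qed.

Lemma rsum_block_le f g R R' : (R <= R')%nat -> (forall r, (R <= r < R')%nat -> g r <= f r) ->
  rsum g R' - rsum g R <= rsum f R' - rsum f R.
Proof.
  intros HR H. replace R' with (R + (R' - R))%nat by lia. rewrite !rsum_add.
  assert (rsum (fun k => g (R + k)%nat) (R' - R) <= rsum (fun k => f (R + k)%nat) (R' - R))
    by (apply rsum_le; intros k Hk; apply H; lia).
  lra.
Qed.

Lemma rsum_swap (f : nat -> nat -> R) I R :
  rsum (fun r => rsum (fun i => f i r) I) R = rsum (fun i => rsum (fun r => f i r) R) I.
Proof.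
  induction R as [|R IH]; simpl.
  - symmetry. apply rsum_zero.
  - rewrite IH, <- rsum_plus. reflexivity.
Qed.

Lemma rsum_restrict_lt (a : nat -> R) R m : (R <= m)%nat ->
  rsum (fun r => if Nat.ltb r R then a r else 0) m = rsum a R.
Proof.
  intros H. induction H; simpl.
  - apply rsum_ext. intros k Hk. destruct (Nat.ltb_spec k R); auto; lia.
  - destruct (Nat.ltb_spec m R); [lia|]. rewrite IHle. ring.
Qed.

Lemma rsum_restrict_ge (a : nat -> R) R m : (R <= m)%nat ->
  rsum (fun r => if Nat.leb R r then a r else 0) m = rsum a m - rsum a R.
Proof.
  intros H. induction H; simpl.
  - rewrite (rsum_ext _ (fun _ => 0)), rsum_zero. ring.
    intros k Hk. destruct (Nat.leb_spec R k); auto; lia.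
  - destruct (Nat.leb_spec R m); [|lia]. rewrite IHle. ring.
Qed.

Lemma rsum_arith c L : 2 * rsum (fun t => INR (c + t)) L = INR L * (2 * INR c + INR L - 1).
Proof.
  induction L as [|L IH]; [simpl; ring|]. simpl rsum.
  rewrite Rmult_plus_distr_l, IH, plus_INR, S_INR. ring.
Qed.

Lemma rsum_geom_half I : rsum (fun i => (/2)^i) I = 2 - 2 * (/2)^I.
Proof. induction I; simpl. lra. rewrite IHI. field. Qed.

Lemma half_pow_pos i : 0 < (/2)^i.
Proof. apply pow_lt. lra. Qed.

Lemma rsum_geom_half_le I : rsum (fun i => (/2)^i) I <= 2.
Proof. rewrite rsum_geom_half. pose proof (half_pow_pos I). lra. Qed.

Lemma half_pow_small eps : 0 < eps -> exists I, forall J, (I <= J)%nat -> (/2)^J < eps.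
Proof.
  intros He. destruct (INR_unbounded (/eps)) as [I HI]. exists I. intros J HJ.
  assert (Hlin : forall n, INR n + 1 <= 2 ^ n).
  { induction n as [|n IHn]. simpl; lra. rewrite S_INR. simpl. pose proof (pos_INR n). lra. }
  assert (INR I <= INR J) by (apply le_INR; auto).
  specialize (Hlin J). rewrite pow_inv.
  assert (0 < 2 ^ J) by (apply pow_lt; lra).
  apply (Rmult_lt_reg_l (2^J)); auto. rewrite Rinv_r by lra.
  assert (Hk : /eps < 2^J) by lra.
  apply (Rmult_lt_compat_l eps) in Hk; auto. rewrite Rinv_r in Hk by lra. lra.
Qed.

Lemma rsum_S_sum_f_R0 b n : rsum b (S n) = sum_f_R0 b n.
Proof.
  induction n as [|n IHn]; [simpl; ring|].
  change (rsum b (S n) + b (S n) = sum_f_R0 b (S n)). rewrite IHn. reflexivity.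
Qed.

Lemma rlimit_is_series b L : rlimit (rsum b) L -> is_series b L.
Proof.
  intros H. apply is_series_Reals. intros eps Heps. destruct (H eps Heps) as [N HN].
  exists N. intros n Hn. unfold R_dist. rewrite <- rsum_S_sum_f_R0. apply HN. lia.
Qed.

Lemma rlimit_Series b L : rlimit (rsum b) L -> Series b = L.
Proof. intros; apply is_series_unique, rlimit_is_series; auto. Qed.

Lemma Series_rlimit b : ex_series b -> rlimit (rsum b) (Series b).
Proof.
  intros H. apply Series_correct, is_series_Reals in H.
  intros eps Heps. destruct (H eps Heps) as [N HN]. exists (S N).
  intros [|m] Hm; [lia|]. rewrite rsum_S_sum_f_R0. apply HN. lia.
Qed.

Lemma rlimit_minus u v lu lv : rlimit u lu -> rlimit v lv -> rlimit (fun m => u m - v m) (lu - lv).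
Proof.
  intros Hu Hv eps He.
  destruct (Hu (eps/2)) as [N1 H1]; [lra|]. destruct (Hv (eps/2)) as [N2 H2]; [lra|].
  exists (max N1 N2). intros m Hm. specialize (H1 m ltac:(lia)). specialize (H2 m ltac:(lia)).
  apply Rabs_def2 in H1. apply Rabs_def2 in H2. apply Rabs_def1; lra.
Qed.

Lemma rlimit_ub u l N B : rlimit u l -> (forall m, (N <= m)%nat -> u m <= B) -> l <= B.
Proof.
  intros H HB. apply Rnot_lt_le. intros h.
  destruct (H (l - B)) as [N' HN']; [lra|].
  specialize (HN' (max N N') ltac:(lia)). specialize (HB (max N N') ltac:(lia)).
  apply Rabs_def2 in HN'. lra.
Qed.

Lemma rlimit_lb u l N B : rlimit u l -> (forall m, (N <= m)%nat -> B <= u m) -> B <= l.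
Proof.
  intros H HB. apply Rnot_lt_le. intros h.
  destruct (H (B - l)) as [N' HN']; [lra|].
  specialize (HN' (max N N') ltac:(lia)). specialize (HB (max N N') ltac:(lia)).
  apply Rabs_def2 in HN'. lra.
Qed.

Lemma rsum_le_Series g m : (forall k, 0 <= g k) -> ex_series g -> rsum g m <= Series g.
Proof.
  intros Hg He. apply (rlimit_lb (rsum g) _ m); [apply Series_rlimit; auto|].
  intros; apply rsum_mono; auto.
Qed.

Lemma Series_nonneg g : (forall k, 0 <= g k) -> ex_series g -> 0 <= Series g.
Proof. intros Hg He. pose proof (rsum_le_Series g 0 Hg He). simpl in *. lra. Qed.

Lemma ex_series_rsum_bounded g B : (forall k, 0 <= g k) -> (forall m, rsum g m <= B) ->
  ex_series g /\ Series g <= B.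
Proof.
  intros Hg HB.
  destruct (growing_cv (rsum g)) as [l Hl].
  - intros n; simpl; specialize (Hg n); lra.
  - exists B. intros x [i ->]. apply HB.
  - assert (Hlim : rlimit (rsum g) l).
    { intros eps Heps. destruct (Hl eps Heps) as [N HN]. exists N. intros m Hm. apply HN. lia. }
    split; [exists l; apply rlimit_is_series; auto|].
    rewrite (rlimit_Series _ _ Hlim). apply (rlimit_ub _ _ 0 B Hlim). auto.
Qed.

Lemma ex_series_nonneg_le a b : (forall k, 0 <= a k <= b k) -> ex_series b -> ex_series a.
Proof.
  intros H Hb. refine (proj1 (ex_series_rsum_bounded a (Series b) (fun k => proj1 (H k)) _)).
  intros m. eapply Rle_trans; [apply rsum_le; intros k _; apply (H k)|].
  apply rsum_le_Series; auto. intros k; specialize (H k); lra.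
Qed.

Lemma Series_shift b I : ex_series b -> Series (fun j => b (I + j)%nat) = Series b - rsum b I.
Proof.
  intros H. apply rlimit_Series. intros eps He. destruct (Series_rlimit b H eps He) as [N HN].
  exists N. intros m Hm. specialize (HN (I + m)%nat ltac:(lia)). rewrite rsum_add in HN.
  replace (rsum (fun k => b (I + k)%nat) m - (Series b - rsum b I)) with
    (rsum b I + rsum (fun k => b (I + k)%nat) m - Series b) by ring. auto.
Qed.

Lemma ex_series_geom_half : ex_series (fun i => (/2)^i).
Proof. apply ex_series_geom. rewrite Rabs_pos_eq; lra. Qed.

Lemma Series_geom_half : Series (fun i => (/2)^i) = 2.
Proof. rewrite Series_geom. field. rewrite Rabs_pos_eq; lra. Qed.

Lemma rsum_limit (U : nat -> nat -> C) (l : nat -> C) R :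
  (forall r, (r < R)%nat -> climit (fun I => U I r) (l r)) ->
  rlimit (fun I => rsum (fun r => Cmod (U I r)) R) (rsum (fun r => Cmod (l r)) R).
Proof.
  induction R as [|R IH]; intros H eps He.
  - exists 0%nat. intros; simpl. rewrite Rminus_0_r, Rabs_R0. lra.
  - destruct (IH (fun r Hr => H r ltac:(lia)) (eps/2)) as [N1 H1]; [lra|].
    destruct (H R ltac:(lia) (eps/2)) as [N2 H2]; [lra|].
    exists (max N1 N2). intros m Hm. simpl.
    specialize (H1 m ltac:(lia)). specialize (H2 m ltac:(lia)).
    pose proof (Cmod_triangle_inv (U m R) (l R)) as T. apply Rabs_le_between in T.
    apply Rabs_def2 in H1. apply Rabs_def1; lra.
Qed.

Lemma climit_dist_le u l c B N : climit u l ->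
  (forall m, (N <= m)%nat -> Cmod (Cminus (u m) c) <= B) -> Cmod (Cminus l c) <= B.
Proof.
  intros H HB. apply Rnot_lt_le. intros h.
  destruct (H (Cmod (Cminus l c) - B)) as [N' HN']; [lra|].
  specialize (HN' (max N N') ltac:(lia)). specialize (HB (max N N') ltac:(lia)).
  pose proof (Cmod_minus_triangle l (u (max N N')) c). rewrite Cmod_minus_sym in HN'. lra.
Qed.

Lemma Re_Cminus a b : Re (Cminus a b) = Re a - Re b.
Proof. destruct a, b; unfold Cminus, Cplus, Copp; simpl; ring. Qed.

Lemma Im_Cminus a b : Im (Cminus a b) = Im a - Im b.
Proof. destruct a, b; unfold Cminus, Cplus, Copp; simpl; ring. Qed.

Lemma has_csum_Re a l : has_csum a l -> rlimit (rsum (fun k => Re (a k))) (Re l).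
Proof.
  rewrite has_csum_climit. intros H eps He. destruct (H eps He) as [N HN].
  exists N. intros m Hm. rewrite <- psum_Re, <- Re_Cminus.
  eapply Rle_lt_trans; [apply re_le_Cmod | apply (HN m Hm)].
Qed.

Lemma has_csum_Im a l : has_csum a l -> rlimit (rsum (fun k => Im (a k))) (Im l).
Proof.
  rewrite has_csum_climit. intros H eps He. destruct (H eps He) as [N HN].
  exists N. intros m Hm. rewrite <- psum_Im, <- Im_Cminus.
  eapply Rle_lt_trans; [apply Im_le_Cmod | apply (HN m Hm)].
Qed.

Lemma has_csum_ext a b l : (forall k, a k = b k) -> has_csum a l -> has_csum b l.
Proof. intros E H. replace b with a by (apply functional_extensionality; auto). exact H. Qed.

Lemma has_csum_zero : has_csum (fun _ => RtoC 0) (RtoC 0).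
Proof.
  apply has_csum_climit. intros eps He. exists 0%nat. intros m _.
  assert (E : psum (fun _ => RtoC 0) m = RtoC 0).
  { induction m as [|m IH]; simpl; [reflexivity|]. rewrite IH. ring. }
  rewrite E. unfold Cminus. rewrite Cplus_opp_r, Cmod_0. lra.
Qed.

Lemma csum_eq a l : has_csum a l -> csum a = l.
Proof.
  intros H. unfold csum. destruct l as [lr li].
  f_equal; apply rlimit_Series; [apply (has_csum_Re a (lr, li)) | apply (has_csum_Im a (lr, li))];
    exact H.
Qed.

Lemma cconv_csum a : cconv a -> has_csum a (csum a).
Proof. intros [l H]. rewrite (csum_eq a l H). auto. Qed.

Definition ccauchy (u : nat -> C) := forall eps, 0 < eps -> exists N, forall m m',
  (N <= m)%nat -> (N <= m')%nat -> Cmod (Cminus (u m) (u m')) < eps.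

Lemma ccauchy_climit u : ccauchy u -> exists l, climit u l.
Proof.
  intros H.
  destruct (Rcomplete.R_complete (fun m => Re (u m))) as [lr Hr].
  { intros eps Heps. destruct (H eps Heps) as [N HN]. exists N. intros n m Hn Hm. unfold Rdist.
    rewrite <- Re_Cminus. eapply Rle_lt_trans; [apply re_le_Cmod | apply HN; lia]. }
  destruct (Rcomplete.R_complete (fun m => Im (u m))) as [li Hi].
  { intros eps Heps. destruct (H eps Heps) as [N HN]. exists N. intros n m Hn Hm. unfold Rdist.
    rewrite <- Im_Cminus. eapply Rle_lt_trans; [apply Im_le_Cmod | apply HN; lia]. }
  exists (lr, li). intros eps Heps.
  destruct (Hr (eps/2)) as [N1 H1]; [lra|]. destruct (Hi (eps/2)) as [N2 H2]; [lra|].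
  exists (max N1 N2). intros m Hm. eapply Rle_lt_trans; [apply Cmod_le_Rabs_Re_Im|].
  specialize (H1 m ltac:(lia)). specialize (H2 m ltac:(lia)). unfold Rdist in *.
  rewrite Re_Cminus, Im_Cminus. simpl. lra.
Qed.

Lemma ccauchy_cconv a : ccauchy (psum a) -> cconv a.
Proof. intros H. destruct (ccauchy_climit _ H) as [l Hl]. exists l. apply has_csum_climit; auto. Qed.

Lemma Cmod_psum_le a g m : (forall k, Cmod (a k) <= g k) -> Cmod (psum a m) <= rsum g m.
Proof.
  intros H. induction m; simpl. rewrite Cmod_0. lra.
  eapply Rle_trans. apply Cmod_triangle. specialize (H m). lra.
Qed.

Lemma has_csum_abs_le a g : (forall k, Cmod (a k) <= g k) -> ex_series g ->
  has_csum a (csum a) /\ Cmod (csum a) <= Series g.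
Proof.
  intros H He.
  assert (Hg : forall k, 0 <= g k) by (intros k; pose proof (Cmod_ge_0 (a k)); specialize (H k); lra).
  assert (Hc : cconv a).
  { apply ccauchy_cconv. intros eps Heps. destruct (Series_rlimit g He (eps/2)) as [N HN]; [lra|].
    assert (Hord : forall m m', (N <= m)%nat -> (m <= m')%nat ->
                   Cmod (Cminus (psum a m') (psum a m)) < eps).
    { intros m m' Hm Hm'. replace m' with (m + (m' - m))%nat by lia.
      rewrite psum_add.
      replace (Cminus (Cplus (psum a m) (psum (fun k => a (m + k)%nat) (m' - m))) (psum a m))
        with (psum (fun k => a (m + k)%nat) (m' - m)) by ring.
      eapply Rle_lt_trans; [apply (Cmod_psum_le _ (fun k => g (m + k)%nat)); auto|].
      pose proof (HN m Hm) as H1. pose proof (HN (m + (m' - m))%nat ltac:(lia)) as H2.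
      rewrite rsum_add in H2. apply Rabs_def2 in H1. apply Rabs_def2 in H2. lra. }
    exists N. intros m m' Hm Hm'. destruct (le_lt_dec m m').
    - rewrite Cmod_minus_sym. auto.
    - apply Hord; auto; lia. }
  pose proof (cconv_csum a Hc) as Hs. split; auto.
  apply has_csum_climit in Hs.
  replace (csum a) with (Cminus (csum a) 0) by ring.
  apply (climit_dist_le _ _ _ _ 0 Hs). intros m _. replace (Cminus (psum a m) 0) with (psum a m) by ring.
  eapply Rle_trans; [apply Cmod_psum_le; eauto | apply rsum_le_Series; auto].
Qed.

Lemma cconv_psum_bounded a : cconv a -> exists H, forall j, Cmod (psum a j) <= H.
Proof.
  intros [l Hl]. apply has_csum_climit in Hl. destruct (Hl 1) as [N HN]; [lra|].
  exists (rsum (fun k => Cmod (a k)) N + Cmod l + 1). intros j.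
  pose proof (rsum_nonneg (fun k => Cmod (a k)) N (fun k => Cmod_ge_0 _)).
  pose proof (Cmod_ge_0 l).
  destruct (le_lt_dec N j) as [h|h].
  - specialize (HN j h). pose proof (Cmod_triangle_inv (psum a j) l) as T.
    apply Rabs_le_between in T. lra.
  - pose proof (Cmod_psum_le a (fun k => Cmod (a k)) j (fun k => Rle_refl _)).
    pose proof (rsum_mono (fun k => Cmod (a k)) j N (fun k => Cmod_ge_0 _) ltac:(lia)). lra.
Qed.

Lemma cconv_tail_small a : cconv a -> forall d, 0 < d -> exists K, forall m j, (K <= m)%nat ->
  Cmod (Cminus (psum a (m + j)) (psum a m)) <= d.
Proof.
  intros [l Hl] d Hd. apply has_csum_climit in Hl. destruct (Hl (d/2)) as [N HN]; [lra|].
  exists N. intros m j Hm. eapply Rle_trans; [apply (Cmod_minus_triangle _ l)|].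
  pose proof (HN (m + j)%nat ltac:(lia)). pose proof (HN m Hm). rewrite (Cmod_minus_sym l). lra.
Qed.

Lemma has_csum_plus a b la lb : has_csum a la -> has_csum b lb ->
  has_csum (fun k => Cplus (a k) (b k)) (Cplus la lb).
Proof.
  rewrite !has_csum_climit. intros Ha Hb eps He.
  destruct (Ha (eps/2)) as [N1 H1]; [lra|]. destruct (Hb (eps/2)) as [N2 H2]; [lra|].
  exists (max N1 N2). intros m Hm. rewrite psum_plus.
  replace (Cminus (Cplus (psum a m) (psum b m)) (Cplus la lb)) with
    (Cplus (Cminus (psum a m) la) (Cminus (psum b m) lb)) by ring.
  eapply Rle_lt_trans; [apply Cmod_triangle|].
  specialize (H1 m ltac:(lia)). specialize (H2 m ltac:(lia)). lra.
Qed.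

Lemma has_csum_scal c a la : has_csum a la -> has_csum (fun k => Cmult c (a k)) (Cmult c la).
Proof.
  rewrite !has_csum_climit. intros Ha eps He.
  pose proof (Cmod_ge_0 c).
  destruct (Ha (eps / (Cmod c + 1))) as [N H1]; [apply Rdiv_lt_0_compat; lra|].
  exists N. intros m Hm. rewrite psum_scal.
  replace (Cminus (Cmult c (psum a m)) (Cmult c la)) with (Cmult c (Cminus (psum a m) la)) by ring.
  rewrite Cmod_mult. specialize (H1 m Hm).
  pose proof (Cmod_ge_0 (Cminus (psum a m) la)).
  apply Rle_lt_trans with ((Cmod c + 1) * Cmod (Cminus (psum a m) la)); [nra|].
  apply (Rmult_lt_compat_l (Cmod c + 1)) in H1; [|lra].
  replace ((Cmod c + 1) * (eps / (Cmod c + 1))) with eps in H1 by (field; lra). lra.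
Qed.

(** * Abel summation against monotone real weights *)

Definition weighted (a : cseq) (z : nat -> R) : cseq := fun k => Cmult (a k) (RtoC (z k)).

Lemma Cmod_psum_weighted_decreasing_le a (w : nat -> R) H m :
  (forall j, (j <= m)%nat -> Cmod (psum a j) <= H) ->
  (forall k, (k <= m)%nat -> 0 <= w k) -> Un_decreasing w ->
  Cmod (psum (weighted a w) m) <= H * w O.
Proof.
  revert w. induction m as [|m IH]; intros w Hb Hn Hm.
  - simpl. rewrite Cmod_0. specialize (Hb 0%nat (le_n _)). simpl in Hb. rewrite Cmod_0 in Hb.
    specialize (Hn 0%nat (le_n _)). nra.
  - (* summation by parts: peel off the last weight w m, which multiplies the full partial sum *)
    assert (E : psum (weighted a w) (S m) =
      Cplus (psum (weighted a (fun k => w k - w m)) m) (Cmult (psum a (S m)) (RtoC (w m)))).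
    { simpl. rewrite (psum_ext (weighted a (fun k => w k - w m))
          (fun k => Cplus (weighted a w k) (Cmult (Copp (RtoC (w m))) (a k)))).
      - rewrite psum_plus, psum_scal. unfold weighted. ring.
      - intros k _. unfold weighted. rewrite RtoC_minus. ring. }
    rewrite E. eapply Rle_trans; [apply Cmod_triangle|].
    pose proof (decreasing_prop w 0 m Hm ltac:(lia)).
    pose proof (IH (fun k => w k - w m) ltac:(intros; apply Hb; lia)
      ltac:(intros k Hk; pose proof (decreasing_prop w k m Hm Hk); lra)
      ltac:(intros k; specialize (Hm k); lra)) as I1. simpl in I1.
    rewrite Cmod_mult, Cmod_R, Rabs_pos_eq by (apply Hn; lia).
    pose proof (Hb (S m) (le_n _)). pose proof (Hn m ltac:(lia)). nra.
Qed.

Lemma Cmod_psum_weighted_growing_le a (z : nat -> R) H eps m :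
  (forall j, (j <= m)%nat -> Cmod (psum a j) <= H) ->
  (forall k, 0 <= z k <= eps) -> Un_growing z ->
  Cmod (psum (weighted a z) m) <= 2 * H * eps.
Proof.
  intros Hb Hz Hm.
  assert (E : psum (weighted a z) m =
     Cminus (Cmult (RtoC eps) (psum a m)) (psum (weighted a (fun k => eps - z k)) m)).
  { rewrite <- psum_scal. unfold Cminus. rewrite <- psum_opp, <- psum_plus. apply psum_ext.
    intros k _. unfold weighted. rewrite RtoC_minus. ring. }
  rewrite E. unfold Cminus. eapply Rle_trans; [apply Cmod_triangle|]. rewrite Cmod_opp.
  pose proof (Cmod_psum_weighted_decreasing_le a (fun k => eps - z k) H m Hb
     ltac:(intros k _; specialize (Hz k); lra) ltac:(intros k; specialize (Hm k); lra)) as I1.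
  simpl in I1. rewrite Cmod_mult, Cmod_R.
  pose proof (Hz 0%nat). rewrite Rabs_pos_eq by lra. pose proof (Hb m (le_n _)).
  assert (0 <= H) by (specialize (Hb 0%nat ltac:(lia)); simpl in Hb; rewrite Cmod_0 in Hb; lra).
  nra.
Qed.

Lemma Cmod_psum_weighted_growing_tail_le a (z : nat -> R) H eps K :
  (forall j, Cmod (Cminus (psum a (K + j)) (psum a K)) <= H) ->
  (forall k, 0 <= z k <= eps) -> Un_growing z ->
  forall j, Cmod (Cminus (psum (weighted a z) (K + j)) (psum (weighted a z) K)) <= 2 * H * eps.
Proof.
  intros Hb Hz Hm j. rewrite psum_add.
  replace (Cminus (Cplus (psum (weighted a z) K) (psum (fun k => weighted a z (K + k)%nat) j))
     (psum (weighted a z) K)) with (psum (fun k => weighted a z (K + k)%nat) j) by ring.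
  apply (Cmod_psum_weighted_growing_le (fun k => a (K + k)%nat) (fun k => z (K + k)%nat)).
  - intros i _. specialize (Hb i). rewrite psum_add in Hb.
    replace (Cminus (Cplus (psum a K) (psum (fun k => a (K + k)%nat) i)) (psum a K)) with
      (psum (fun k => a (K + k)%nat) i) in Hb by ring. exact Hb.
  - intros; apply Hz.
  - intros k. rewrite Nat.add_succ_r. apply Hm.
Qed.

Lemma cconv_weighted_growing a z eps : cconv a -> (forall k, 0 <= z k <= eps) -> Un_growing z ->
  cconv (weighted a z).
Proof.
  intros Ha Hz Hm. apply ccauchy_cconv. intros e He.
  assert (0 <= eps) by (specialize (Hz 0%nat); lra).
  set (d := e / (8 * (eps + 1))).
  assert (Hd : 0 < d) by (unfold d; apply Rdiv_lt_0_compat; lra).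
  destruct (cconv_tail_small a Ha d Hd) as [K HK]. exists K. intros m m' Hm1 Hm2.
  pose proof (Cmod_psum_weighted_growing_tail_le a z d eps K (fun j => HK K j (le_n _)) Hz Hm)
    as T.
  pose proof (T (m - K)%nat) as T1. pose proof (T (m' - K)%nat) as T2.
  replace (K + (m - K))%nat with m in T1 by lia. replace (K + (m' - K))%nat with m' in T2 by lia.
  eapply Rle_lt_trans; [apply (Cmod_minus_triangle _ (psum (weighted a z) K))|].
  rewrite (Cmod_minus_sym _ (psum (weighted a z) m')).
  assert (2 * d * eps < e / 2).
  { unfold d. apply (Rmult_lt_reg_r (8 * (eps + 1))); [lra|]. field_simplify; nra. }
  lra.
Qed.

Lemma Cmod_csum_weighted_growing_tail_le a z H eps K : cconv a ->
  (forall j, Cmod (Cminus (psum a (K + j)) (psum a K)) <= H) ->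
  (forall k, 0 <= z k <= eps) -> Un_growing z ->
  Cmod (Cminus (csum (weighted a z)) (psum (weighted a z) K)) <= 2 * H * eps.
Proof.
  intros Ha Hb Hz Hm. pose proof (cconv_csum _ (cconv_weighted_growing a z eps Ha Hz Hm)) as Hs.
  apply has_csum_climit in Hs. apply (climit_dist_le _ _ _ _ K Hs).
  intros m Hk. replace m with (K + (m - K))%nat by lia.
  apply Cmod_psum_weighted_growing_tail_le; auto.
Qed.

Lemma Cmod_csum_weighted_growing_le a z H eps : cconv a -> (forall j, Cmod (psum a j) <= H) ->
  (forall k, 0 <= z k <= eps) -> Un_growing z ->
  Cmod (csum (weighted a z)) <= 2 * H * eps.
Proof.
  intros Ha Hb Hz Hm.
  replace (csum (weighted a z)) with (Cminus (csum (weighted a z)) (psum (weighted a z) 0))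
    by (simpl; ring).
  apply Cmod_csum_weighted_growing_tail_le; auto.
  intros j. replace (Cminus (psum a (0 + j)) (psum a 0)) with (psum a j) by (simpl; ring). auto.
Qed.

Lemma csum_weighted_growing_null a (z : nat -> nat -> R) : cconv a ->
  (forall n k, 0 <= z n k <= 1) -> (forall n, Un_growing (z n)) ->
  (forall k eps, 0 < eps -> exists N, forall n, (N <= n)%nat -> z n k <= eps) ->
  climit (fun n => csum (weighted a (z n))) (RtoC 0).
Proof.
  intros Ha Hz Hm Hs eps He.
  (* split at an index [K] beyond which [a] has small tails (Abel), and use [z n K -> 0] below it *)
  destruct (cconv_tail_small a Ha (eps/4)) as [K HK]; [lra|].
  set (S0 := rsum (fun k => Cmod (a k)) K).
  assert (HS0 : 0 <= S0) by (apply rsum_nonneg; intros; apply Cmod_ge_0).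
  destruct (Hs K (eps / (4 * (S0 + 1)))) as [N HN]; [apply Rdiv_lt_0_compat; lra|].
  exists N. intros n Hn.
  replace (Cminus (csum (weighted a (z n))) (RtoC 0)) with
    (Cplus (Cminus (csum (weighted a (z n))) (psum (weighted a (z n)) K)) (psum (weighted a (z n)) K))
    by ring.
  eapply Rle_lt_trans; [apply Cmod_triangle|].
  pose proof (Cmod_csum_weighted_growing_tail_le a (z n) (eps/4) 1 K Ha
                (fun j => HK K j (le_n _)) (Hz n) (Hm n)) as T1.
  assert (T2 : Cmod (psum (weighted a (z n)) K) <= S0 * z n K).
  { eapply Rle_trans; [apply (Cmod_psum_le _ (fun k => Cmod (a k) * z n k))|].
    - intros k. unfold weighted. rewrite Cmod_mult, Cmod_R, Rabs_pos_eq by apply Hz. lra.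
    - unfold S0. rewrite Rmult_comm, <- rsum_scal. apply rsum_le. intros k Hk.
      pose proof (growing_prop (z n) K k (Hm n) ltac:(lia)). pose proof (Cmod_ge_0 (a k)). nra. }
  specialize (HN n Hn).
  assert (S0 * z n K <= eps / 4).
  { apply Rle_trans with (S0 * (eps / (4 * (S0 + 1)))); [apply Rmult_le_compat_l; auto|].
    apply (Rmult_le_reg_r (4 * (S0 + 1))); [lra|]. field_simplify; nra. }
  lra.
Qed.

Lemma Arow_plus M x y n : cconv (fun k => Cmult (M n k) (x k)) -> cconv (fun k => Cmult (M n k) (y k)) ->
  Arow M (fun k => Cplus (x k) (y k)) n = Cplus (Arow M x n) (Arow M y n).
Proof.
  intros Hx Hy. unfold Arow. apply csum_eq.
  pose proof (has_csum_plus _ _ _ _ (cconv_csum _ Hx) (cconv_csum _ Hy)) as H.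
  revert H; apply has_csum_ext; intros k; ring.
Qed.

Lemma Arow_scal M c x n : cconv (fun k => Cmult (M n k) (x k)) ->
  Arow M (fun k => Cmult c (x k)) n = Cmult c (Arow M x n).
Proof.
  intros Hx. unfold Arow. apply csum_eq.
  pose proof (has_csum_scal c _ _ (cconv_csum _ Hx)) as H.
  revert H; apply has_csum_ext; intros k; ring.
Qed.

Lemma lA_plus M x y : lA M x -> lA M y -> lA M (fun k => Cplus (x k) (y k)).
Proof.
  intros [Hx1 Hx2] [Hy1 Hy2]. split.
  - intros n. eexists.
    pose proof (has_csum_plus _ _ _ _ (cconv_csum _ (Hx1 n)) (cconv_csum _ (Hy1 n))) as H.
    revert H; apply has_csum_ext; intros k; ring.
  - apply (ex_series_nonneg_le _ (fun n => Cmod (Arow M x n) + Cmod (Arow M y n))).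
    + intros n. split; [apply Cmod_ge_0|]. rewrite Arow_plus; auto. apply Cmod_triangle.
    + apply (ex_series_plus (fun n => Cmod (Arow M x n))); auto.
Qed.

Lemma lA_scal M c x : lA M x -> lA M (fun k => Cmult c (x k)).
Proof.
  intros [Hx1 Hx2]. split.
  - intros n. eexists.
    pose proof (has_csum_scal c _ _ (cconv_csum _ (Hx1 n))) as H.
    revert H; apply has_csum_ext; intros k; ring.
  - apply (ex_series_nonneg_le _ (fun n => Cmod c * Cmod (Arow M x n))).
    + intros n. split; [apply Cmod_ge_0|]. rewrite Arow_scal, Cmod_mult; auto. lra.
    + apply (ex_series_scal_l (Cmod c) (fun n => Cmod (Arow M x n))); auto.
Qed.

Lemma lA_e_row_cconv M : lA M e_seq -> forall r, cconv (M r).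
Proof.
  intros [H _] r. destruct (H r) as [l Hl]. exists l.
  revert Hl; apply has_csum_ext; intros k; unfold e_seq; ring.
Qed.

Lemma psum_delta a i m : psum (fun k => Cmult (a k) (delta i k)) m = if Nat.ltb i m then a i else RtoC 0.
Proof.
  induction m as [|m IH]; [reflexivity|]. simpl psum. rewrite IH. unfold delta.
  destruct (Nat.ltb_spec i m), (Nat.ltb_spec i (S m)), (Nat.eqb_spec m i); try lia; subst; ring.
Qed.

Lemma Arow_delta M i r : Arow M (delta i) r = M r i.
Proof.
  unfold Arow. apply csum_eq, has_csum_climit. intros eps He. exists (S i). intros m Hm.
  rewrite psum_delta. destruct (Nat.ltb_spec i m); [|lia].
  replace (Cminus (M r i) (M r i)) with (RtoC 0) by ring. rewrite Cmod_0. lra.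
Qed.

Definition row_functional (M : cmatrix) (u : nat -> C) (x : cseq) : C :=
  csum (fun r => Cmult (u r) (Arow M x r)).

Section RowFunctional.

Variables (M : cmatrix) (u : nat -> C).
Hypothesis Hu : forall r, Cmod (u r) <= 1.

Lemma row_functional_abs_le x : lA M x ->
  has_csum (fun r => Cmult (u r) (Arow M x r)) (row_functional M u x) /\
  Cmod (row_functional M u x) <= sem_sum M x.
Proof.
  intros [_ Hx]. apply has_csum_abs_le; auto. intros r. rewrite Cmod_mult.
  specialize (Hu r). pose proof (Cmod_ge_0 (Arow M x r)). pose proof (Cmod_ge_0 (u r)). nra.
Qed.

Lemma row_functional_plus x y : lA M x -> lA M y ->
  row_functional M u (fun k => Cplus (x k) (y k)) = Cplus (row_functional M u x) (row_functional M u y).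
Proof.
  intros Hx Hy. unfold row_functional at 1. apply csum_eq.
  pose proof (has_csum_plus _ _ _ _ (proj1 (row_functional_abs_le x Hx))
                                    (proj1 (row_functional_abs_le y Hy))) as H.
  revert H; apply has_csum_ext; intros r.
  rewrite Arow_plus by (apply Hx || apply Hy). ring.
Qed.

Lemma row_functional_scal c x : lA M x ->
  row_functional M u (fun k => Cmult c (x k)) = Cmult c (row_functional M u x).
Proof.
  intros Hx. unfold row_functional at 1. apply csum_eq.
  pose proof (has_csum_scal c _ _ (proj1 (row_functional_abs_le x Hx))) as H.
  revert H; apply has_csum_ext; intros r.
  rewrite Arow_scal by apply Hx. ring.
Qed.

Lemma row_functional_dual : lA_dual M (row_functional M u).
Proof.
  split; [|split].
  - intros; apply row_functional_plus; auto.
  - intros; apply row_functional_scal; auto.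
  - exists 1, 0%nat. intros x Hx. simpl. pose proof (proj2 (row_functional_abs_le x Hx)). lra.
Qed.

End RowFunctional.

(** * Deferred Cesaro means and ramps *)

Definition finsupp (x : cseq) : Prop := exists N, forall k, (N <= k)%nat -> x k = RtoC 0.

Definition e_section (K : nat) : cseq := fun k => if Nat.ltb k K then RtoC 1 else RtoC 0.

Lemma finsupp_zero : finsupp (fun _ => RtoC 0).
Proof. exists 0%nat. auto. Qed.

Lemma finsupp_plus x y : finsupp x -> finsupp y -> finsupp (fun k => Cplus (x k) (y k)).
Proof. intros [N1 H1] [N2 H2]. exists (max N1 N2). intros k Hk. rewrite H1, H2 by lia. ring. Qed.

Lemma finsupp_scal c x : finsupp x -> finsupp (fun k => Cmult c (x k)).
Proof. intros [N1 H1]. exists N1. intros k Hk. rewrite H1 by lia. ring. Qed.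

Lemma finsupp_psum (g : nat -> cseq) L : (forall t, finsupp (g t)) ->
  finsupp (fun k => psum (fun t => g t k) L).
Proof. intros Hg. induction L as [|L IH]; simpl; [apply finsupp_zero | apply finsupp_plus; auto]. Qed.

Lemma finsupp_delta i : finsupp (delta i).
Proof. exists (S i). intros k Hk. unfold delta. destruct (Nat.eqb_spec k i); auto; lia. Qed.

Lemma finsupp_e_section K : finsupp (e_section K).
Proof. exists K. intros k Hk. unfold e_section. destruct (Nat.ltb_spec k K); auto; lia. Qed.

Lemma e_section_S K : e_section (S K) = fun k => Cplus (e_section K k) (delta K k).
Proof.
  apply functional_extensionality; intros k. unfold e_section, delta.
  destruct (Nat.ltb_spec k (S K)), (Nat.ltb_spec k K), (Nat.eqb_spec k K); try lia; ring.
Qed.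

Definition dc_mean_vec (p q : nat -> nat) (n : nat) : cseq :=
  fun k => Cmult (RtoC (/ INR (q n - p n)))
                 (psum (fun t => e_section (S (p n) + t) k) (q n - p n)).

Lemma finsupp_dc_mean_vec p q n : finsupp (dc_mean_vec p q n).
Proof. apply finsupp_scal, finsupp_psum. intros; apply finsupp_e_section. Qed.

Section LinearOnFinsupp.

Variables (M : cmatrix) (f : cseq -> C).
Hypothesis f_plus : forall x y, lA M x -> lA M y ->
  f (fun k => Cplus (x k) (y k)) = Cplus (f x) (f y).
Hypothesis f_scal : forall c x, lA M x -> f (fun k => Cmult c (x k)) = Cmult c (f x).
Hypothesis finsupp_lA : forall x, finsupp x -> lA M x.

Lemma lin_zero : f (fun _ => RtoC 0) = RtoC 0.
Proof.
  transitivity (f (fun k => Cmult (RtoC 0) ((fun _ => RtoC 0) k))).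
  - f_equal. apply functional_extensionality; intros; ring.
  - rewrite f_scal by (apply finsupp_lA, finsupp_zero). ring.
Qed.

Lemma lin_psum (g : nat -> cseq) L : (forall t, finsupp (g t)) ->
  f (fun k => psum (fun t => g t k) L) = psum (fun t => f (g t)) L.
Proof.
  intros Hg. induction L as [|L IH]; simpl; [apply lin_zero|].
  rewrite f_plus by (apply finsupp_lA; auto using finsupp_psum). rewrite IH. auto.
Qed.

Lemma lin_e_section K : f (e_section K) = psum (fun i => f (delta i)) K.
Proof.
  induction K as [|K IH].
  - exact lin_zero.
  - rewrite e_section_S.
    rewrite f_plus by (apply finsupp_lA; auto using finsupp_e_section, finsupp_delta).
    rewrite IH. auto.
Qed.

Lemma dc_mean_eq p q n : dc_mean p q f n = f (dc_mean_vec p q n).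
Proof.
  unfold dc_mean, dc_mean_vec.
  rewrite f_scal by (apply finsupp_lA, finsupp_psum; intros; apply finsupp_e_section).
  rewrite lin_psum by (intros; apply finsupp_e_section).
  f_equal. apply psum_ext. intros t _. symmetry. apply lin_e_section.
Qed.

End LinearOnFinsupp.

(* [ramp p q n = e - dc_mean_vec p q n] (see [e_split_ramp]): it vanishes up to index [p n], rises
   linearly and equals [1] from index [q n - 1] on. *)
Definition ramp (p q : nat -> nat) (n k : nat) : R :=
  1 - / INR (q n - p n) * INR ((q n - p n) - (k - p n)).

Lemma psum_e_section_count c L k :
  psum (fun t => e_section (c + t) k) L = RtoC (INR (L - (k + 1 - c))).
Proof.
  induction L as [|L IH]; [reflexivity|]. simpl psum. rewrite IH. unfold e_section.
  destruct (Nat.ltb_spec k (c + L)).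
  - replace (S L - (k + 1 - c))%nat with (S (L - (k + 1 - c))) by lia.
    rewrite S_INR, RtoC_plus. auto.
  - replace (S L - (k + 1 - c))%nat with 0%nat by lia.
    replace (L - (k + 1 - c))%nat with 0%nat by lia.
    simpl. unfold RtoC, Cplus. simpl. f_equal; ring.
Qed.

Lemma e_split_ramp p q n :
  e_seq = (fun k => Cplus (dc_mean_vec p q n k) (RtoC (ramp p q n k))).
Proof.
  apply functional_extensionality; intros k. unfold e_seq, dc_mean_vec, ramp.
  rewrite psum_e_section_count. replace (k + 1 - S (p n))%nat with (k - p n)%nat by lia.
  unfold RtoC, Cplus, Cmult; simpl. f_equal; ring.
Qed.

Section Ramp.

Variables p q : nat -> nat.
Hypothesis hpq : forall n, (p n < q n)%nat.

Lemma ramp_length_pos n : 0 < INR (q n - p n).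
Proof. apply lt_0_INR. specialize (hpq n). lia. Qed.

Lemma ramp_bounds n k : 0 <= ramp p q n k <= 1.
Proof.
  pose proof (ramp_length_pos n). unfold ramp.
  assert (INR (q n - p n - (k - p n)) <= INR (q n - p n)) by (apply le_INR; lia).
  pose proof (pos_INR (q n - p n - (k - p n))).
  assert (0 <= / INR (q n - p n) * INR (q n - p n - (k - p n)) <= 1).
  { split. apply Rmult_le_pos; auto. apply Rlt_le, Rinv_0_lt_compat; auto.
    apply (Rmult_le_reg_l (INR (q n - p n))); auto. rewrite <- Rmult_assoc, Rinv_r by lra. lra. }
  lra.
Qed.

Lemma ramp_growing n : Un_growing (ramp p q n).
Proof.
  intros k. pose proof (ramp_length_pos n). unfold ramp.
  assert (INR (q n - p n - (S k - p n)) <= INR (q n - p n - (k - p n))) by (apply le_INR; lia).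
  assert (0 < / INR (q n - p n)) by (apply Rinv_0_lt_compat; auto). nra.
Qed.

Lemma ramp_mul_le n k : (k < q n)%nat -> ramp p q n k * INR (q n - k) <= INR k.
Proof.
  intros Hk. pose proof (ramp_length_pos n). unfold ramp.
  set (L := (q n - p n)%nat) in *. set (a := (L - (k - p n))%nat).
  assert (E : 1 - / INR L * INR a = INR (L - a) / INR L).
  { rewrite minus_INR by (unfold a; lia). field. lra. }
  rewrite E.
  assert (Hn : ((L - a) * (q n - k) <= k * L)%nat).
  { destruct (le_lt_dec k (p n)).
    - replace (L - a)%nat with 0%nat by (unfold a, L; lia). simpl. lia.
    - specialize (hpq n). apply Nat.mul_le_mono; unfold a, L; lia. }
  apply le_INR in Hn. rewrite !mult_INR in Hn.
  apply (Rmult_le_reg_r (INR L)); auto. unfold Rdiv.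
  replace (INR (L - a) * / INR L * INR (q n - k) * INR L) with (INR (L - a) * INR (q n - k))
    by (field; lra).
  lra.
Qed.

Lemma ramp_eventually_small
  (hq : forall M : nat, exists N : nat, forall n, (N <= n)%nat -> (M <= q n)%nat) k eps :
  0 < eps -> exists N, forall n, (N <= n)%nat -> ramp p q n k <= eps.
Proof.
  intros He. destruct (INR_unbounded (INR k / eps)) as [M HM].
  destruct (hq (k + M + 1)%nat) as [N HN]. exists N. intros n Hn. specialize (HN n Hn).
  pose proof (ramp_mul_le n k ltac:(lia)). pose proof (ramp_bounds n k).
  assert (INR M <= INR (q n - k)) by (apply le_INR; lia).
  assert (0 <= INR k) by apply pos_INR.
  assert (INR k < eps * INR M).
  { apply (Rmult_lt_compat_l eps) in HM; auto.
    replace (eps * (INR k / eps)) with (INR k) in HM by (field; lra). lra. }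
  assert (0 < INR M) by nra.
  apply Rnot_lt_le. intros. nra.
Qed.

End Ramp.

(** * Dyadic superpositions of growing weights *)

Definition dyadic_sum (Y : nat -> nat -> R) (k : nat) : R := Series (fun i => (/2)^i * Y i k).

Definition dyadic_tail (Y : nat -> nat -> R) (I k : nat) : R :=
  Series (fun j => (/2)^(I + j) * Y (I + j)%nat k).

Lemma ex_series_half_pow_shift I : ex_series (fun j => (/2)^(I + j)).
Proof.
  apply (ex_series_ext (fun j => (/2)^I * (/2)^j)); [intros; rewrite pow_add; auto|].
  apply (ex_series_scal_l ((/2)^I) (fun j => (/2)^j)), ex_series_geom_half.
Qed.

Section Dyadic.

Variable Y : nat -> nat -> R.
Hypothesis Y_bounds : forall i k, 0 <= Y i k <= 1.
Hypothesis Y_growing : forall i, Un_growing (Y i).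

Lemma ex_series_dyadic_tail I k : ex_series (fun j => (/2)^(I + j) * Y (I + j)%nat k).
Proof.
  apply (ex_series_nonneg_le _ (fun j => (/2)^(I + j))); [|apply ex_series_half_pow_shift].
  intros j. pose proof (half_pow_pos (I + j)). specialize (Y_bounds (I + j)%nat k). split; nra.
Qed.

Lemma dyadic_tail_eq I k :
  dyadic_tail Y I k = dyadic_sum Y k - rsum (fun i => (/2)^i * Y i k) I.
Proof.
  apply (Series_shift (fun i => (/2)^i * Y i k)). apply (ex_series_dyadic_tail 0).
Qed.

Lemma dyadic_tail_bounds I k : 0 <= dyadic_tail Y I k <= 2 * (/2)^I.
Proof.
  unfold dyadic_tail.
  assert (Hterm : forall j, 0 <= (/2)^(I + j) * Y (I + j)%nat k <= (/2)^(I + j)).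
  { intros j. pose proof (half_pow_pos (I + j)). specialize (Y_bounds (I + j)%nat k). split; nra. }
  split.
  - apply Series_nonneg; [apply Hterm | apply ex_series_dyadic_tail].
  - eapply Rle_trans; [apply Series_le; [apply Hterm | apply ex_series_half_pow_shift]|].
    rewrite (Series_ext _ (fun j => (/2)^I * (/2)^j)) by (intros; rewrite pow_add; auto).
    rewrite Series_scal_l. change (pow (/2)) with (fun i => (/2)^i). rewrite Series_geom_half. lra.
Qed.

Lemma dyadic_tail_growing I : Un_growing (dyadic_tail Y I).
Proof.
  intros k. apply Series_le; [|apply ex_series_dyadic_tail].
  intros j. pose proof (half_pow_pos (I + j)). specialize (Y_bounds (I + j)%nat k).
  specialize (Y_growing (I + j)%nat k). split; nra.
Qed.

Variable a : cseq.
Hypothesis Ha : cconv a.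

Lemma has_csum_weighted_dyadic_partial I :
  has_csum (weighted a (fun k => rsum (fun i => (/2)^i * Y i k) I))
    (psum (fun i => Cmult (RtoC ((/2)^i)) (csum (weighted a (Y i)))) I).
Proof.
  induction I as [|I IH]; simpl.
  - generalize has_csum_zero. apply has_csum_ext. intros k. unfold weighted. simpl. ring.
  - pose proof (has_csum_plus _ _ _ _ IH (has_csum_scal (RtoC ((/2)^I)) _ _
      (cconv_csum _ (cconv_weighted_growing a (Y I) 1 Ha (Y_bounds I) (Y_growing I))))) as H.
    revert H. apply has_csum_ext. intros k. unfold weighted. rewrite RtoC_plus, RtoC_mult. ring.
Qed.

Lemma cconv_weighted_dyadic_tail I : cconv (weighted a (dyadic_tail Y I)).
Proof.
  apply (cconv_weighted_growing a _ (2 * (/2)^I) Ha).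
  - intros; apply dyadic_tail_bounds.
  - apply dyadic_tail_growing.
Qed.

(* Interchange of the sums over [i] and [k]: the dyadic tails are uniformly small, so Abel
   summation bounds their contribution. *)
Lemma climit_csum_weighted_dyadic :
  climit (psum (fun i => Cmult (RtoC ((/2)^i)) (csum (weighted a (Y i)))))
         (csum (weighted a (dyadic_sum Y))).
Proof.
  destruct (cconv_psum_bounded a Ha) as [H HH].
  assert (H0 : 0 <= H) by (specialize (HH 0%nat); simpl in HH; rewrite Cmod_0 in HH; lra).
  intros eps He. destruct (half_pow_small (eps / (4 * (H + 1)))) as [I0 HI0].
  { apply Rdiv_lt_0_compat; lra. }
  exists I0. intros I HI.
  pose proof (has_csum_plus _ _ _ _ (has_csum_weighted_dyadic_partial I)
                (cconv_csum _ (cconv_weighted_dyadic_tail I))) as F.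
  assert (E : weighted a (dyadic_sum Y) = fun k => Cplus
      (weighted a (fun k => rsum (fun i => (/2)^i * Y i k) I) k)
      (weighted a (dyadic_tail Y I) k)).
  { apply functional_extensionality; intros k. unfold weighted.
    rewrite dyadic_tail_eq, RtoC_minus. ring. }
  rewrite E, (csum_eq _ _ F).
  replace (Cminus _ _) with (Copp (csum (weighted a (dyadic_tail Y I)))) by ring.
  rewrite Cmod_opp. eapply Rle_lt_trans.
  { apply (Cmod_csum_weighted_growing_le a _ H (2 * (/2)^I)); auto.
    - intros; apply dyadic_tail_bounds.
    - apply dyadic_tail_growing. }
  specialize (HI0 I HI). pose proof (half_pow_pos I).
  apply Rle_lt_trans with (4 * (H + 1) * (/2)^I); [nra|].
  apply (Rmult_lt_compat_l (4 * (H + 1))) in HI0; [|lra].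
  replace (4 * (H + 1) * (eps / (4 * (H + 1)))) with eps in HI0 by (field; lra). lra.
Qed.

End Dyadic.

(** * Gliding humps *)

Lemma recursive_choice (P : nat -> nat -> nat -> Prop) (Q : nat -> nat -> nat -> Prop) :
  (forall i R, exists n, P i R n) -> (forall n R, exists R', (R < R')%nat /\ Q n R R') ->
  exists ns Rs : nat -> nat, Rs 0%nat = 0%nat /\
    forall i, P i (Rs i) (ns i) /\ (Rs i < Rs (S i))%nat /\ Q (ns i) (Rs i) (Rs (S i)).
Proof.
  intros HP HQ.
  pose (g := fun i R => proj1_sig (constructive_indefinite_description _ (HP i R))).
  pose (h := fun n R => proj1_sig (constructive_indefinite_description _ (HQ n R))).
  pose (Rs := fix Rs (i : nat) : nat := match i with O => O | S i' => h (g i' (Rs i')) (Rs i') end).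
  exists (fun i => g i (Rs i)), Rs. split; [reflexivity|].
  intros i. split.
  - apply (proj2_sig (constructive_indefinite_description _ (HP i (Rs i)))).
  - apply (proj2_sig (constructive_indefinite_description _ (HQ (g i (Rs i)) (Rs i)))).
Qed.

Lemma increasing_le (Rs : nat -> nat) : (forall i, (Rs i < Rs (S i))%nat) ->
  forall i j, (i <= j)%nat -> (Rs i <= Rs j)%nat.
Proof. intros H i j Hij. induction Hij; auto. specialize (H m). lia. Qed.

Lemma block_index_exists (Rs : nat -> nat) : Rs 0%nat = 0%nat -> (forall i, (Rs i < Rs (S i))%nat) ->
  exists blk : nat -> nat, forall r i, (Rs i <= r < Rs (S i))%nat -> blk r = i.
Proof.
  intros H0 H.
  assert (Hge : forall i, (i <= Rs i)%nat) by (induction i; [lia | specialize (H i); lia]).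
  assert (Hex : forall r, exists i, (Rs i <= r < Rs (S i))%nat).
  { intros r. assert (Hm : forall m, (r < Rs m)%nat -> exists i, (Rs i <= r < Rs (S i))%nat).
    { induction m; intros Hm; [lia|]. destruct (le_lt_dec (Rs m) r); [exists m; lia | auto]. }
    apply (Hm (S r)). pose proof (Hge (S r)). lia. }
  exists (fun r => proj1_sig (constructive_indefinite_description _ (Hex r))).
  intros r i Hi. destruct (constructive_indefinite_description _ (Hex r)) as [j Hj]. simpl.
  destruct (lt_eq_lt_dec i j) as [[h|h]|h]; auto.
  - pose proof (increasing_le Rs H (S i) j h). lia.
  - pose proof (increasing_le Rs H (S j) i h). lia.
Qed.

Lemma eventually_rsum_small (w : nat -> nat -> C) R :
  (forall r, climit (fun n => w n r) (RtoC 0)) ->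
  forall eps, 0 < eps -> exists N, forall n, (N <= n)%nat -> rsum (fun r => Cmod (w n r)) R <= eps.
Proof.
  intros H eps He. pose proof (rsum_limit w (fun _ => RtoC 0) R (fun r _ => H r)) as L.
  rewrite (rsum_ext _ (fun _ => 0)), rsum_zero in L by (intros; rewrite Cmod_0; auto).
  destruct (L eps He) as [N HN]. exists N. intros n Hn. specialize (HN n Hn).
  rewrite Rminus_0_r in HN. apply Rabs_def2 in HN. lra.
Qed.

Lemma ex_series_tail_small (g : nat -> R) R : ex_series g ->
  exists R', (R < R')%nat /\ Series g - rsum g R' <= 1.
Proof.
  intros Hg. destruct (Series_rlimit g Hg 1) as [N HN]; [lra|].
  exists (S (max N R)). split; [lia|].
  specialize (HN (S (max N R)) ltac:(lia)). apply Rabs_def2 in HN. lra.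
Qed.

Definition csign (z : C) : C :=
  if Req_EM_T (Cmod z) 0 then RtoC 0 else Cmult (Cconj z) (RtoC (/ Cmod z)).

Lemma Cmod_csign_le z : Cmod (csign z) <= 1.
Proof.
  unfold csign. destruct (Req_EM_T (Cmod z) 0); [rewrite Cmod_0; lra|].
  rewrite Cmod_mult, Cmod_conj, Cmod_R. pose proof (Cmod_ge_0 z).
  rewrite Rabs_pos_eq by (apply Rlt_le, Rinv_0_lt_compat; lra). rewrite Rinv_r; lra.
Qed.

Lemma csign_mul z : Cmult (csign z) z = RtoC (Cmod z).
Proof.
  unfold csign. destruct (Req_EM_T (Cmod z) 0) as [e|n]; [rewrite e; ring|].
  replace (Cmult (Cmult (Cconj z) (RtoC (/ Cmod z))) z)
    with (Cmult (Cmult z (Cconj z)) (RtoC (/ Cmod z))) by ring.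
  rewrite <- Cmod2_conj, <- RtoC_mult. f_equal. field. auto.
Qed.

Lemma Re_mul_ge u z : Cmod u <= 1 -> - Cmod z <= Re (Cmult u z).
Proof.
  intros H. pose proof (re_le_Cmod (Cmult u z)) as Hre. rewrite Cmod_mult in Hre.
  pose proof (Cmod_ge_0 z). pose proof (Cmod_ge_0 u). apply Rabs_le_between in Hre. nra.
Qed.

Lemma Re_csum_block_aligned_ge (w u : nat -> C) R R' :
  ex_series (fun r => Cmod (w r)) -> (forall r, Cmod (u r) <= 1) -> (R <= R')%nat ->
  (forall r, (R <= r < R')%nat -> Cmult (u r) (w r) = RtoC (Cmod (w r))) ->
  Series (fun r => Cmod (w r)) - 2 * rsum (fun r => Cmod (w r)) R
    - 2 * (Series (fun r => Cmod (w r)) - rsum (fun r => Cmod (w r)) R')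
  <= Re (csum (fun r => Cmult (u r) (w r))).
Proof.
  intros Hw Hu HR Halign.
  set (a := fun r => Cmod (w r)). set (f := fun r => Re (Cmult (u r) (w r))).
  set (cut := fun r => a r - 2 * (if Nat.ltb r R then a r else 0)
                           - 2 * (if Nat.leb R' r then a r else 0)).
  assert (Hcut : forall r, cut r <= f r).
  { intros r. unfold cut, f, a. pose proof (Re_mul_ge (u r) (w r) (Hu r)).
    destruct (Nat.ltb_spec r R), (Nat.leb_spec R' r); try lia; try lra.
    rewrite Halign by lia. simpl. lra. }
  assert (Hc : has_csum (fun r => Cmult (u r) (w r)) (csum (fun r => Cmult (u r) (w r)))).
  { apply (has_csum_abs_le _ a); [|exact Hw]. intros r. unfold a. rewrite Cmod_mult.
    specialize (Hu r). pose proof (Cmod_ge_0 (w r)). pose proof (Cmod_ge_0 (u r)). nra. }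
  apply (rlimit_lb _ _ R' _ (has_csum_Re _ _ Hc)). intros m Hm.
  eapply Rle_trans; [|apply rsum_le; intros k _; apply Hcut].
  unfold cut. rewrite !rsum_minus, !rsum_scal, rsum_restrict_lt, rsum_restrict_ge by lia.
  assert (rsum a m <= Series a) by (apply rsum_le_Series; [intros; apply Cmod_ge_0 | exact Hw]).
  assert (rsum a R' <= rsum a m) by (apply rsum_mono; [intros; apply Cmod_ge_0 | lia]).
  unfold a in *. lra.
Qed.

Lemma l1_norm_eventually_bounded (w : nat -> nat -> C) :
  (forall n, ex_series (fun r => Cmod (w n r))) ->
  (forall r, climit (fun n => w n r) (RtoC 0)) ->
  (forall u : nat -> C, (forall r, Cmod (u r) <= 1) ->
     climit (fun n => csum (fun r => Cmult (u r) (w n r))) (RtoC 0)) ->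
  exists B N0, forall n, (N0 <= n)%nat -> Series (fun r => Cmod (w n r)) <= B.
Proof.
  intros Hw Hpt Hu. apply NNPP. intros Hneg.
  assert (Hfreq : forall B N0, exists n, (N0 <= n)%nat /\ B < Series (fun r => Cmod (w n r))).
  { intros B N0. apply NNPP. intros H. apply Hneg. exists B, N0. intros n Hn.
    apply Rnot_lt_le. intros Hlt. apply H. eauto. }
  (* choose rows [ns i] of mass above [i + 4], almost all of it on the block [Rs i, Rs (S i)) *)
  destruct (recursive_choice
    (fun i R n => (i <= n)%nat /\ rsum (fun r => Cmod (w n r)) R <= 1 /\
                  INR i + 4 < Series (fun r => Cmod (w n r)))
    (fun n R R' => Series (fun r => Cmod (w n r)) - rsum (fun r => Cmod (w n r)) R' <= 1))
    as [ns [Rs [HR0 HRs]]].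
  { intros i R. destruct (eventually_rsum_small w R Hpt 1) as [N1 HN1]; [lra|].
    destruct (Hfreq (INR i + 4) (max N1 i)) as [n [Hn1 Hn2]].
    exists n. repeat split; auto; [lia | apply HN1; lia]. }
  { intros n R. destruct (ex_series_tail_small _ R (Hw n)) as [R' HR']. eauto. }
  destruct (block_index_exists Rs HR0 (fun i => proj1 (proj2 (HRs i)))) as [blk Hblk].
  set (u := fun r => csign (w (ns (blk r)) r)).
  assert (Hub : forall r, Cmod (u r) <= 1) by (intros; apply Cmod_csign_le).
  destruct (Hu u Hub 1) as [N HN]; [lra|].
  destruct (HRs (S N)) as [[Hi1 [Hi2 Hi3]] [Hi4 Hi5]].
  specialize (HN (ns (S N)) ltac:(lia)).
  replace (Cminus _ (RtoC 0)) with (csum (fun r => Cmult (u r) (w (ns (S N)) r))) in HN by ring.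
  pose proof (Re_csum_block_aligned_ge (w (ns (S N))) u (Rs (S N)) (Rs (S (S N)))
    (Hw _) Hub ltac:(lia) ltac:(intros r Hr; unfold u; rewrite (Hblk r (S N) Hr); apply csign_mul)).
  pose proof (re_le_Cmod (csum (fun r => Cmult (u r) (w (ns (S N)) r)))) as Hre.
  apply Rabs_le_between in Hre. rewrite S_INR in Hi3. pose proof (pos_INR N). lra.
Qed.

Lemma block_mass_off_diagonal (V : nat -> nat -> R) (Rs : nat -> nat) :
  (forall j r, 0 <= V j r) -> (forall j, ex_series (V j)) -> (forall i, (Rs i < Rs (S i))%nat) ->
  (forall j, rsum (V j) (Rs j) <= 1) -> (forall j, Series (V j) - rsum (V j) (Rs (S j)) <= 1) ->
  forall i j, j <> i -> rsum (V j) (Rs (S i)) - rsum (V j) (Rs i) <= 1.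
Proof.
  intros Hpos Hex Hinc Hhead Htail i j Hji.
  pose proof (rsum_le_Series (V j) (Rs (S i)) (Hpos j) (Hex j)).
  pose proof (rsum_nonneg (V j) (Rs i) (Hpos j)).
  destruct (lt_eq_lt_dec j i) as [[h|h]|h]; [| lia |].
  - pose proof (rsum_mono (V j) _ _ (Hpos j) (increasing_le Rs Hinc (S j) i h)).
    specialize (Htail j). lra.
  - pose proof (rsum_mono (V j) _ _ (Hpos j) (increasing_le Rs Hinc (S i) j h)).
    specialize (Hhead j). lra.
Qed.

Lemma half_pow_mul_ge i s b : 2^i * (INR i + 5) <= s -> s - 2 <= b -> INR i + 3 <= (/2)^i * b.
Proof.
  intros Hs Hb. pose proof (half_pow_pos i).
  assert (E : (/2)^i * 2^i = 1) by (rewrite <- Rpow_mult_distr, Rinv_l, pow1; lra).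
  assert (1 <= 2^i) by (apply pow_R1_Rle; lra).
  assert ((/2)^i <= 1) by nra.
  apply Rle_trans with ((/2)^i * (2^i * (INR i + 5) - 2)); [|apply Rmult_le_compat_l; lra].
  rewrite Rmult_minus_distr_l, <- Rmult_assoc, E. lra.
Qed.

Definition rvec (z : nat -> R) : cseq := fun k => RtoC (z k).

Section DyadicRows.

Variable M : cmatrix.
Hypothesis rows_cconv : forall r, cconv (M r).
Variable Y : nat -> nat -> R.
Hypothesis Y_bounds : forall i k, 0 <= Y i k <= 1.
Hypothesis Y_growing : forall i, Un_growing (Y i).

Lemma Arow_dyadic_climit r :
  climit (psum (fun i => Cmult (RtoC ((/2)^i)) (Arow M (rvec (Y i)) r)))
         (Arow M (rvec (dyadic_sum Y)) r).
Proof. exact (climit_csum_weighted_dyadic Y Y_bounds Y_growing (M r) (rows_cconv r)). Qed.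

Lemma lA_dyadic B : (forall i, lA M (rvec (Y i))) -> (forall i, sem_sum M (rvec (Y i)) <= B) ->
  lA M (rvec (dyadic_sum Y)).
Proof.
  intros HY HB. split.
  - intros r. exact (cconv_weighted_dyadic_tail Y Y_bounds Y_growing (M r) (rows_cconv r) 0).
  - refine (proj1 (ex_series_rsum_bounded _ (2 * B) (fun _ => Cmod_ge_0 _) _)). intros R.
    set (U := fun I r => psum (fun i => Cmult (RtoC ((/2)^i)) (Arow M (rvec (Y i)) r)) I).
    apply (rlimit_ub _ _ 0 _ (rsum_limit U _ R (fun r _ => Arow_dyadic_climit r))).
    intros I _.
    apply Rle_trans with (rsum (fun r => rsum (fun i => (/2)^i * Cmod (Arow M (rvec (Y i)) r)) I) R).
    { apply rsum_le. intros r _. apply Cmod_psum_le. intros i.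
      rewrite Cmod_mult, Cmod_R, Rabs_pos_eq by apply Rlt_le, half_pow_pos. lra. }
    rewrite rsum_swap. apply Rle_trans with (rsum (fun i => (/2)^i * B) I).
    { apply rsum_le. intros i _. rewrite rsum_scal.
      apply Rmult_le_compat_l; [apply Rlt_le, half_pow_pos|].
      eapply Rle_trans; [apply rsum_le_Series; [intros; apply Cmod_ge_0 | apply (HY i)] | apply HB]. }
    rewrite (rsum_ext _ (fun i => B * (/2)^i)) by (intros; ring). rewrite rsum_scal.
    assert (0 <= B).
    { eapply Rle_trans; [|apply (HB 0%nat)].
      apply Series_nonneg; [intros; apply Cmod_ge_0 | apply (HY 0%nat)]. }
    rewrite (Rmult_comm 2 B). apply Rmult_le_compat_l; [lra | apply rsum_geom_half_le].
Qed.

(* The layers [j <> i] contribute at most [sum_j 2^-j * 1 <= 2] on the block. *)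
Lemma dyadic_block_ge i R R' : (R <= R')%nat ->
  (forall j, j <> i -> rsum (fun r => Cmod (Arow M (rvec (Y j)) r)) R'
                      - rsum (fun r => Cmod (Arow M (rvec (Y j)) r)) R <= 1) ->
  (/2)^i * (rsum (fun r => Cmod (Arow M (rvec (Y i)) r)) R'
            - rsum (fun r => Cmod (Arow M (rvec (Y i)) r)) R) - 2
  <= rsum (fun r => Cmod (Arow M (rvec (dyadic_sum Y)) r)) R'
     - rsum (fun r => Cmod (Arow M (rvec (dyadic_sum Y)) r)) R.
Proof.
  intros HR Hother.
  set (V := fun j r => Cmod (Arow M (rvec (Y j)) r)).
  set (U := fun I r => psum (fun j => Cmult (RtoC ((/2)^j)) (Arow M (rvec (Y j)) r)) I).
  pose proof (fun R0 => rsum_limit U _ R0 (fun r _ => Arow_dyadic_climit r)) as HL.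
  apply (rlimit_lb _ _ (S i) _ (rlimit_minus _ _ _ _ (HL R') (HL R))). intros I HI.
  set (h := fun j r => if Nat.eqb j i then 0 else (/2)^j * V j r).
  assert (Hpw : forall r, (/2)^i * V i r - rsum (fun j => h j r) I <= Cmod (U I r)).
  { intros r. unfold U. rewrite (psum_split_at _ I i) by lia.
    eapply Rle_trans; [|apply Cmod_plus_ge].
    rewrite Cmod_mult, Cmod_R, Rabs_pos_eq by apply Rlt_le, half_pow_pos.
    apply Rplus_le_compat_l, Ropp_le_contravar, Cmod_psum_le.
    intros j. unfold h. destruct (Nat.eqb j i); [rewrite Cmod_0; lra|].
    rewrite Cmod_mult, Cmod_R, Rabs_pos_eq by apply Rlt_le, half_pow_pos. unfold V. lra. }
  eapply Rle_trans; [|apply (rsum_block_le (fun r => Cmod (U I r)) _ R R' HR (fun r _ => Hpw r))].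
  assert (Elin : forall m, rsum (fun r => (/2)^i * V i r - rsum (fun j => h j r) I) m =
      (/2)^i * rsum (V i) m - rsum (fun j => if Nat.eqb j i then 0 else (/2)^j * rsum (V j) m) I).
  { intros m. rewrite rsum_minus, rsum_scal, rsum_swap. f_equal. apply rsum_ext. intros j _.
    unfold h. destruct (Nat.eqb j i); [apply rsum_zero | apply rsum_scal]. }
  rewrite !Elin.
  assert (rsum (fun j => if Nat.eqb j i then 0 else (/2)^j * rsum (V j) R') I -
          rsum (fun j => if Nat.eqb j i then 0 else (/2)^j * rsum (V j) R) I <= 2).
  { rewrite <- rsum_minus. eapply Rle_trans; [|apply (rsum_geom_half_le I)]. apply rsum_le.
    intros j _. pose proof (half_pow_pos j). destruct (Nat.eqb_spec j i); [lra|].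
    specialize (Hother j n). unfold V in *. nra. }
  unfold V in *. lra.
Qed.

End DyadicRows.

(* The witness is [sum_i 2^-i Y (ns i)] for a sparse subsequence [ns]: each [M1 (Y (ns i))] has
   [l^1]-norm at most [B], while block [i] of its [M2]-image carries mass at least [i + 1]. *)
Lemma lA_not_incl_of_dyadic_humps (M1 M2 : cmatrix) (Y : nat -> nat -> R) :
  (forall n k, 0 <= Y n k <= 1) -> (forall n, Un_growing (Y n)) ->
  (forall r, cconv (M1 r)) -> (forall r, cconv (M2 r)) ->
  (forall n, lA M1 (rvec (Y n))) -> (forall n, lA M2 (rvec (Y n))) ->
  (exists B N0, forall n, (N0 <= n)%nat -> sem_sum M1 (rvec (Y n)) <= B) ->
  (forall r, climit (fun n => Arow M2 (rvec (Y n)) r) (RtoC 0)) ->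
  (forall T, exists N, forall n, (N <= n)%nat -> T <= sem_sum M2 (rvec (Y n))) ->
  ~ (forall x, lA M1 x -> lA M2 x).
Proof.
  intros HY HYm H1 H2 Hw Hv [B [N0 HB]] Hpt Hgrow Hincl.
  set (V := fun n r => Cmod (Arow M2 (rvec (Y n)) r)).
  destruct (recursive_choice
    (fun i R n => (N0 <= n)%nat /\ rsum (V n) R <= 1 /\ 2^i * (INR i + 5) <= Series (V n))
    (fun n R R' => Series (V n) - rsum (V n) R' <= 1))
    as [ns [Rs [HR0 HRs]]].
  { intros i R. destruct (eventually_rsum_small (fun n r => Arow M2 (rvec (Y n)) r) R Hpt 1)
      as [N1 HN1]; [lra|].
    destruct (Hgrow (2^i * (INR i + 5))) as [N2 HN2].
    exists (max (max N1 N2) N0). repeat split; [lia | apply HN1; lia | apply HN2; lia]. }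
  { intros n R. apply ex_series_tail_small, Hv. }
  assert (Hinc : forall i, (Rs i < Rs (S i))%nat) by (intros i; apply HRs).
  set (Y' := fun i => Y (ns i)).
  pose proof (Hincl _ (lA_dyadic M1 H1 Y' (fun i => HY (ns i)) (fun i => HYm (ns i)) B
                        (fun i => Hw (ns i)) (fun i => HB (ns i) (proj1 (proj1 (HRs i)))))) as [_ HG].
  set (G := fun r => Cmod (Arow M2 (rvec (dyadic_sum Y')) r)) in HG.
  assert (Hblock : forall i, INR i + 1 <= rsum G (Rs (S i)) - rsum G (Rs i)).
  { intros i. destruct (HRs i) as [[_ [_ Hbig]] [_ Htail]].
    pose proof (dyadic_block_ge M2 H2 Y' (fun i => HY (ns i)) (fun i => HYm (ns i)) i (Rs i) (Rs (S i))
      ltac:(specialize (Hinc i); lia)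
      (block_mass_off_diagonal (fun j => V (ns j)) Rs (fun _ _ => Cmod_ge_0 _) (fun j => proj2 (Hv (ns j)))
         Hinc (fun j => proj1 (proj2 (proj1 (HRs j)))) (fun j => proj2 (proj2 (HRs j))) i)) as Hdom.
    assert (Series (V (ns i)) - 2 <= rsum (V (ns i)) (Rs (S i)) - rsum (V (ns i)) (Rs i))
      by (destruct (HRs i) as [[_ [Hhead _]] _]; lra).
    pose proof (half_pow_mul_ge i _ _ Hbig H).
    unfold G, V, Y' in *. cbv beta in *. lra. }
  assert (Htel : forall i, INR i <= rsum G (Rs i)).
  { induction i; [rewrite HR0; simpl; apply Rle_refl|].
    rewrite S_INR. specialize (Hblock i). pose proof (pos_INR i). lra. }
  destruct (INR_unbounded (Series G)) as [i Hi].
  pose proof (rsum_le_Series G (Rs i) (fun _ => Cmod_ge_0 _) HG). specialize (Htel i). lra.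
Qed.

Section Ramps.

Variables p q : nat -> nat.
Hypothesis hpq : forall n, (p n < q n)%nat.
Hypothesis hq : forall M : nat, exists N : nat, forall n, (N <= n)%nat -> (M <= q n)%nat.

Variable M : cmatrix.
Hypothesis finsupp_lA : forall x, finsupp x -> lA M x.
Hypothesis he : lA M e_seq.

Lemma lA_ramp n : lA M (rvec (ramp p q n)).
Proof.
  replace (rvec (ramp p q n)) with (fun k => Cplus (e_seq k) (Cmult (RtoC (-1)) (dc_mean_vec p q n k))).
  - apply lA_plus; [exact he|]. apply lA_scal, finsupp_lA, finsupp_dc_mean_vec.
  - apply functional_extensionality; intros k. rewrite (e_split_ramp p q n). unfold rvec. ring.
Qed.

Lemma lA_dual_ramp f n : lA_dual M f ->
  f (rvec (ramp p q n)) = Cminus (f e_seq) (dc_mean p q f n).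
Proof.
  intros [f_plus [f_scal _]].
  rewrite (dc_mean_eq M f f_plus f_scal finsupp_lA), (e_split_ramp p q n) at 1.
  rewrite f_plus; [unfold rvec; ring | apply finsupp_lA, finsupp_dc_mean_vec | apply lA_ramp].
Qed.

Lemma Arow_ramp_null r : climit (fun n => Arow M (rvec (ramp p q n)) r) (RtoC 0).
Proof.
  apply (csum_weighted_growing_null (M r) (ramp p q)).
  - apply lA_e_row_cconv, he.
  - apply ramp_bounds, hpq.
  - apply ramp_growing, hpq.
  - intros k eps He. apply ramp_eventually_small; auto.
Qed.

(* Testing conullity with the functionals [x |-> sum_r u_r (Mx)_r] makes [M (ramp n)] weakly null
   in [l^1]. *)
Lemma dc_conull_ramp_l1_bounded : dc_conull p q M ->
  exists B N0, forall n, (N0 <= n)%nat -> sem_sum M (rvec (ramp p q n)) <= B.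
Proof.
  intros hconull.
  apply (l1_norm_eventually_bounded (fun n r => Arow M (rvec (ramp p q n)) r)).
  - intros n. apply lA_ramp.
  - apply Arow_ramp_null.
  - intros u Hu. pose proof (row_functional_dual M u Hu) as Hf.
    pose proof (filterlim_climit _ _ (hconull _ Hf)) as Hc.
    intros eps He. destruct (Hc eps He) as [N HN]. exists N. intros n Hn.
    change (csum (fun r => Cmult (u r) (Arow M (rvec (ramp p q n)) r)))
      with (row_functional M u (rvec (ramp p q n))).
    rewrite lA_dual_ramp by exact Hf.
    replace (Cminus (Cminus (row_functional M u e_seq) (dc_mean p q (row_functional M u) n)) (RtoC 0))
      with (Copp (Cminus (dc_mean p q (row_functional M u) n) (row_functional M u e_seq))) by ring.
    rewrite Cmod_opp. apply HN, Hn.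
Qed.

Lemma Cmod_dc_mean_const_one_ge f n : (forall i, f (delta i) = RtoC 1) ->
  INR (q n) / 2 <= Cmod (dc_mean p q f n).
Proof.
  intros Hf. specialize (hpq n).
  set (L := (q n - p n)%nat).
  assert (E : dc_mean p q f n = RtoC (/ INR L * rsum (fun t => INR (S (p n) + t)) L)).
  { unfold dc_mean. rewrite RtoC_mult. f_equal. rewrite <- psum_RtoC. apply psum_ext.
    intros t _. rewrite (psum_ext _ (fun _ => RtoC 1)) by (intros; apply Hf).
    rewrite psum_RtoC, rsum_one. auto. }
  assert (HL : INR L = INR (q n) - INR (p n)) by (unfold L; apply minus_INR; lia).
  assert (0 < INR L) by (apply lt_0_INR; unfold L; lia).
  pose proof (pos_INR (p n)).
  (* the mean of [p n + 1, ..., q n] is [(p n + q n + 1) / 2] *)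
  assert (Hsum : rsum (fun t => INR (S (p n) + t)) L = INR L * (2 * (INR (p n) + 1) + INR L - 1) / 2)
    by (pose proof (rsum_arith (S (p n)) L) as Har; rewrite S_INR in Har; lra).
  rewrite E, Hsum, Cmod_R.
  replace (/ INR L * (INR L * (2 * (INR (p n) + 1) + INR L - 1) / 2))
    with ((2 * (INR (p n) + 1) + INR L - 1) / 2) by (field; lra).
  rewrite Rabs_pos_eq; lra.
Qed.

(* The functional [x |-> sum_r (Mx)_r] equals [1] on each [delta j], so its deferred Cesaro means
   grow like [q n / 2], while its value at [ramp p q n] is bounded by [sem_sum M (ramp p q n)]. *)
Lemma column_sums_ramp_l1_unbounded : (forall k, has_csum (fun n => M n k) (RtoC 1)) ->
  forall T, exists N, forall n, (N <= n)%nat -> T <= sem_sum M (rvec (ramp p q n)).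
Proof.
  intros hcol T.
  set (F := row_functional M (fun _ => RtoC 1)).
  assert (Hu : forall r : nat, Cmod (RtoC 1) <= 1) by (intros; rewrite Cmod_1; lra).
  assert (HFd : forall i, F (delta i) = RtoC 1).
  { intros i. apply csum_eq. generalize (hcol i). apply has_csum_ext. intros r.
    rewrite Arow_delta. ring. }
  destruct (INR_unbounded (2 * (T + Cmod (F e_seq)))) as [K HK]. destruct (hq K) as [N HN].
  exists N. intros n Hn. pose proof (le_INR _ _ (HN n Hn)).
  pose proof (proj2 (row_functional_abs_le M _ Hu _ (lA_ramp n))) as Hle.
  fold F in Hle. rewrite lA_dual_ramp in Hle by apply row_functional_dual, Hu.
  pose proof (Cmod_dc_mean_const_one_ge F n HFd).
  pose proof (Cmod_triangle_inv (dc_mean p q F n) (F e_seq)) as Htri.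
  apply Rabs_le_between in Htri. rewrite Cmod_minus_sym in Htri. lra.
Qed.

End Ramps.

Theorem mainTheorem1 (p q : nat -> nat)
  (hpq : forall n, (p n < q n)%nat)
  (hq : forall M : nat, exists N : nat, forall n, (N <= n)%nat -> (M <= q n)%nat)
  (A : cmatrix)
  (hphi : forall x : cseq, (exists N, forall k, (N <= k)%nat -> x k = RtoC 0) -> lA A x)
  (he : lA A e_seq)
  (hconull : dc_conull p q A) :
  ~ l_replaceable A.
Proof.
  intros [D [hD hcol]].
  assert (hphiD : forall x, finsupp x -> lA D x) by (intros x Hx; apply hD, hphi, Hx).
  assert (heD : lA D e_seq) by (apply hD, he).
  apply (lA_not_incl_of_dyadic_humps A D (ramp p q)).
  - intros n k. apply ramp_bounds, hpq.
  - intros n. apply ramp_growing, hpq.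
  - apply lA_e_row_cconv, he.
  - apply lA_e_row_cconv, heD.
  - apply lA_ramp; assumption.
  - apply lA_ramp; assumption.
  - apply dc_conull_ramp_l1_bounded; assumption.
  - apply Arow_ramp_null; assumption.
  - apply column_sums_ramp_l1_unbounded; assumption.
  - intros x Hx. apply hD, Hx.
Qed.
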